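(* Let $(H_n)_{n\ge0}$ be the monic Hermite polynomials ($H_0=1$, $H_{-1}=0$, $H_n=xH_{n-1}-\tfrac{n-1}{2}H_{n-2}$), with $H_n(x)=\sum_{i=0}^nb_{n,i}x^i$ (convention $b_{m,m}=1$, $b_{m,l}=0$ for $l>m$). For integers $n\ge k\ge1$ and $0\le t\le k-1$ let $E_{k,n,t}$ be the determinant of the $(k-t-1)\times(k-t-1)$ matrix with $(\rho,c)$ entry $b_{n-k+t+1+c,\;n-k+t+\rho}$ (with $E_{k,n,k-1}=1$). Then for integers $j\ge0$, $r\ge1$ with $j+r\le k$, $$E_{k,n,j+r-1}=\begin{cases}0,& k-j-r \text{ odd},\\[2pt] \dfrac{n!}{(n-k+j+r)!\,\left(\frac{k-j-r}{2}\right)!\,2^{k-j-r}},& k-j-r\text{ even}.\end{cases}$$ *)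

From mathcomp Require Import all_boot all_order all_algebra.
Set Implicit Arguments. Unset Strict Implicit. Unset Printing Implicit Defensive.
Import Order.TTheory GRing.Theory Num.Theory.
Local Open Scope ring_scope.

(* Pair (H_n, H_{n+1}) of monic Hermite polynomials over rat:
   H_0 = 1, H_1 = x (from H_{-1} = 0), H_{n+2} = x H_{n+1} - (n+1)/2 H_n. *)
Fixpoint herm_pair (n : nat) : {poly rat} * {poly rat} :=
  match n with
  | 0 => (1, 'X)
  | m.+1 => let: (p, q) := herm_pair m in
            (q, 'X * q - ((m.+1)%:R / 2%:R) *: p)
  end.

Definition herm (n : nat) : {poly rat} := (herm_pair n).1.

(* b_{n,i} : coefficient of x^i in H_n (automatically 0 for i > n). *)
Definition hb (n i : nat) : rat := (herm n)`_i.

(* E_{k,n,t}: determinant of the (k-t-1)x(k-t-1) matrix whose (rho,c) entry,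
   rho, c in {1,...,k-t-1}, is b_{n-k+t+1+c, n-k+t+rho}.
   (0-based ordinals rho', c' correspond to rho = rho'+1, c = c'+1.)
   For t = k-1 this is the empty determinant, = 1. *)
Definition Ekn (k n t : nat) : rat :=
  \det (\matrix_(rho < (k - t - 1)%N, c < (k - t - 1)%N)
          hb (n - k + t + 1 + c.+1)%N (n - k + t + rho.+1)%N).

From mathcomp Require Import all_boot all_order all_algebra.
From mathcomp Require Import ring zify.
Set Implicit Arguments. Unset Strict Implicit. Unset Printing Implicit Defensive.
Import Order.TTheory GRing.Theory Num.Theory.
Local Open Scope ring_scope.

(* Let B = (b_{p,l}) be the unitriangular matrix of Hermite coefficients.  Its
   inverse holds the coordinates of x^N in the Hermite basis, which are
   N! / (q! s! 4^s) on H_q when N = q + 2s and 0 when N - q is odd.  The matrix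
   defining E_{k,n,t} is a Hessenberg block of B, and the last column of the
   inverse solves a linear system with that block whose right-hand side is
   supported on the first row; Cramer's rule for the last unknown, whose
   cofactor is a unitriangular minor, gives E = (-1)^m times one such
   coordinate. *)

Lemma herm0 : herm 0 = 1. Proof. by []. Qed.

Lemma hermS p : herm p.+1 = (herm_pair p).2.
Proof. by rewrite /herm /=; case: (herm_pair p). Qed.

Lemma herm1 : herm 1 = 'X. Proof. by rewrite hermS. Qed.

Lemma hermSS p : herm p.+2 = 'X * herm p.+1 - (p.+1%:R / 2) *: herm p.
Proof. by rewrite hermS /= hermS /herm; case: (herm_pair p). Qed.

Lemma mulX_herm p : 'X * herm p = herm p.+1 + (p%:R / 2) *: herm p.-1.
Proof.
case: p => [|p]; last by rewrite hermSS subrK.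
by rewrite herm0 herm1 mulr1 mul0r scale0r addr0.
Qed.

Lemma herm_monic_size p : herm p \is monic /\ size (herm p) = p.+1.
Proof.
suff [] : (herm p \is monic /\ size (herm p) = p.+1) /\
          (herm p.+1 \is monic /\ size (herm p.+1) = p.+2) by [].
elim: p => [|p [IHp [monS sizeS]]].
  by rewrite herm0 herm1 monic1 monicX size_polyC size_polyX.
have sizeXS : size ('X * herm p.+1) = p.+3.
  by rewrite size_monicM ?monicX ?size_polyX ?sizeS ?monic_neq0.
have small : (size (- ((p.+1%:R / 2) *: herm p))%R < size ('X * herm p.+1)%R)%N.
  by rewrite size_polyN sizeXS (leq_ltn_trans (size_scale_leq _ _)) // IHp.2.
split=> //; rewrite hermSS; split.
  by apply/monicP; rewrite lead_coefDl // lead_coef_monicM ?monicX //; apply/monicP.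
by rewrite size_polyDl.
Qed.

Lemma hb_diag p : hb p p = 1.
Proof.
have [/monicP lead sz] := herm_monic_size p.
by rewrite /hb -lead /lead_coef sz.
Qed.

Lemma hb_gt p l : (p < l)%N -> hb p l = 0.
Proof. by move=> lt_pl; rewrite /hb nth_default // (herm_monic_size p).2. Qed.

(* The coordinates of X^N on the basis (H_q); the recursion is
   X^(N+1) = X * X^N expanded with [mulX_herm]. *)
Fixpoint herm_coord (N : nat) : nat -> rat :=
  match N with
  | 0 => fun q => (q == 0)%:R
  | N.+1 => fun q => (if q is q'.+1 then herm_coord N q' else 0)
                     + q.+1%:R / 2 * herm_coord N q.+1
  end.

Lemma herm_coordS0 N : herm_coord N.+1 0 = 1 / 2 * herm_coord N 1.
Proof. by rewrite /= add0r. Qed.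

Lemma herm_coordSS N q :
  herm_coord N.+1 q.+1 = herm_coord N q + q.+2%:R / 2 * herm_coord N q.+2.
Proof. by []. Qed.

Lemma herm_coord_gt N q : (N < q)%N -> herm_coord N q = 0.
Proof.
elim: N q => [|N IH] [|q] //= lt_Nq.
by rewrite !IH ?mulr0 ?addr0 //; lia.
Qed.

Lemma herm_coord_odd q s : herm_coord (q + s.*2).+1 q = 0.
Proof.
move Ne: (q + s.*2)%N => N; elim: N q s Ne => [|N IH] [|q] [|s] // Ne.
- by rewrite herm_coordS0 (IH 1%N s) ?mulr0 //; lia.
- by rewrite herm_coordSS (IH q 0%N) ?herm_coord_gt ?mulr0 ?addr0 //; lia.
- by rewrite herm_coordSS (IH q s.+1) ?(IH q.+2 s) ?mulr0 ?addr0 //; lia.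
Qed.

Lemma nat_fact_neq0 n : n`!%:R != 0 :> rat.
Proof. by rewrite pnatr_eq0 -lt0n fact_gt0. Qed.

Lemma herm_coord_even q s :
  herm_coord (q + s.*2) q = (q + s.*2)`!%:R / (q`! * s`! * 2 ^ s.*2)%:R.
Proof.
move Ne: (q + s.*2)%N => N; elim: N q s Ne => [|N IH] [|q] [|s] // Ne.
- rewrite herm_coordS0 (IH 1%N s); last by lia.
  have -> : N = (s.*2).+1 by lia.
  rewrite !factS doubleS !expnS !natrM !natrX -!natr1 -addnn !natrD.
  by field; rewrite ?natr1 ?expf_neq0 ?nat_fact_neq0 ?pnatr_eq0.
- have -> : q = N by lia.
  rewrite herm_coordSS [herm_coord N N.+2]herm_coord_gt // mulr0 addr0.
  by rewrite (IH N 0%N) ?addn0 // !muln1 !divff ?nat_fact_neq0.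
- rewrite herm_coordSS (IH q s.+1) ?(IH q.+2 s); try lia.
  have -> : N = (q + s.*2).+2 by lia.
  rewrite !factS doubleS !expnS !natrM !natrX -!natr1 -!addnn !natrD.
  by field; rewrite ?natr1 ?expf_neq0 ?nat_fact_neq0 ?pnatr_eq0.
Qed.

Lemma herm_coord_diag N : herm_coord N N = 1.
Proof.
by have := herm_coord_even N 0; rewrite addn0 !muln1 divff ?nat_fact_neq0.
Qed.

Lemma Xn_herm_expansion N K :
  (N < K)%N -> 'X^N = \sum_(0 <= p < K) herm_coord N p *: herm p.
Proof.
elim: N K => [|N IH] [|K] // lt_NK.
  rewrite big_nat_recl //= scale1r herm0 expr0 big1 ?addr0 // => p _.
  by rewrite scale0r.
rewrite exprS (IH K.+1) ?(ltnW lt_NK) // mulr_sumr.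
under eq_bigr => p _ do rewrite -scalerAr mulX_herm scalerDr scalerA.
rewrite big_split /= big_nat_recr //= herm_coord_gt // scale0r addr0.
rewrite big_nat_recl //= mul0r mulr0 scale0r add0r.
under [RHS]eq_bigr => p _ do rewrite /= scalerDl.
rewrite big_split /= big_nat_recl //= scale0r add0r.
rewrite [X in _ = _ + X]big_nat_recr //= (herm_coord_gt (ltnW lt_NK)).
rewrite mulr0 scale0r addr0.
by congr (_ + _); apply: eq_bigr => p _; rewrite mulrC.
Qed.

Lemma herm_coord_dual N K l : (N < K)%N ->
  \sum_(0 <= p < K) herm_coord N p * hb p l = (l == N)%:R.
Proof.
move=> lt_NK.
have := congr1 (fun P : {poly rat} => P`_l) (Xn_herm_expansion lt_NK).
by rewrite coefXn coef_sum => ->; apply: eq_bigr => p _; rewrite coefZ.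
Qed.

Lemma herm_coord_dual_tail N a l : (a <= l < N)%N ->
  \sum_(a.+1 <= p < N.+1) herm_coord N p * hb p l =
  - ((l == a)%:R * herm_coord N a).
Proof.
case/andP=> le_al lt_lN; have := herm_coord_dual l (ltnSn N).
rewrite (@big_cat_nat _ _ _ a.+1) ?(ltn_eqF lt_lN) //=; last by lia.
rewrite big_nat_recr //= big_nat_cond big1 ?add0r; last first.
  by move=> p /andP[/andP[_ lt_pa] _]; rewrite hb_gt ?mulr0 //; lia.
move/eqP; rewrite addrC addr_eq0 => /eqP ->; congr (- _).
case: eqP => [->|/eqP ne_la]; first by rewrite hb_diag mulr1 mul1r.
by rewrite hb_gt ?mulr0 ?mul0r //; lia.
Qed.

Lemma cramer_rule (R : comPzRingType) n (A : 'M[R]_n) (x b : 'cV[R]_n) i :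
  A *m x = b -> \det A * x i 0 = \sum_j cofactor A j i * b j 0.
Proof.
move=> Axb; have := congr1 (fun B => (\adj A *m B) i 0) Axb.
rewrite /= mulmxA mul_adj_mx mul_scalar_mx !mxE => ->.
by apply: eq_bigr => j _; rewrite mxE.
Qed.

Definition herm_coef_mx a m : 'M[rat]_m := \matrix_(i, j) hb (a + j.+1) (a + i).

Lemma herm_coef_mx_minor a m :
  \det (row' 0 (col' ord_max (herm_coef_mx a m.+1))) = 1.
Proof.
rewrite -det_tr det_trig.
  by apply: big1 => i _; rewrite !mxE lift0 lift_max hb_diag.
apply/forallP => i; apply/forallP => j; apply/implyP => lt_ij.
by rewrite !mxE lift0 lift_max hb_gt // ltn_add2l.
Qed.

Lemma det_herm_coef_mx a m :
  \det (herm_coef_mx a m) = (-1) ^+ m * herm_coord (a + m) a.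
Proof.
case: m => [|m]; first by rewrite det_mx00 expr0 mul1r addn0 herm_coord_diag.
set N := (a + m.+1)%N.
pose x : 'cV[rat]_m.+1 := \col_j herm_coord N (a + j.+1).
pose b : 'cV[rat]_m.+1 := \col_i ((- herm_coord N a) *+ (i == ord0)).
have Mxb : herm_coef_mx a m.+1 *m x = b.
  apply/matrixP => i k; rewrite !mxE.
  have lt_iN : (a <= a + i < N)%N by rewrite leq_addr /= ltn_add2l.
  have := herm_coord_dual_tail lt_iN.
  rewrite -{1}[a.+1]add0n big_addn subSS addKn big_mkord => tail.
  rewrite (eq_bigr (fun j : 'I_m.+1 =>
    herm_coord N (j + a.+1) * hb (j + a.+1) (a + i))).
    by rewrite tail -{2}[a]addn0 eqn_add2l mulr_natl mulNrn.
  by move=> j _; rewrite !mxE mulrC addnS [(a + j)%N]addnC -addnS.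
have := cramer_rule ord_max Mxb; rewrite mxE herm_coord_diag mulr1 => ->.
rewrite big_ord_recl big1 => [|j _]; last by rewrite mxE mulr0n mulr0.
rewrite addr0 mxE mulr1n /cofactor herm_coef_mx_minor mulr1.
by rewrite add0n exprS mulN1r mulNr mulrN.
Qed.

Lemma herm_coord_closed q m : herm_coord (q + m) q =
  if odd m then 0 else (q + m)`!%:R / (q`! * (m./2)`! * 2 ^ m)%:R.
Proof.
rewrite -{1 3 5}(odd_double_half m); case: (odd m).
  by rewrite add1n addnS herm_coord_odd.
by rewrite add0n herm_coord_even.
Qed.

Lemma Ekn_herm_coord k n t : (t < k <= n)%N ->
  Ekn k n t = (-1) ^+ (k - t - 1) * herm_coord n (n - k + t + 1).
Proof.
move=> /andP[lt_tk le_kn].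
have {2}-> : n = (n - k + t + 1 + (k - t - 1))%N by lia.
rewrite -det_herm_coef_mx; congr (\det _); apply/matrixP => i j.
by rewrite !mxE; congr hb; lia.
Qed.

Theorem lemma6 (n k j r : nat) :
  (1 <= k)%N -> (k <= n)%N -> (1 <= r)%N -> (j + r <= k)%N ->
  Ekn k n (j + r - 1) =
  (if odd (k - j - r) then 0
   else (n`!)%:R /
        (((n - k + j + r)`! * ((k - j - r)./2)`! * 2 ^ (k - j - r))%N)%:R).
Proof.
move=> _ le_kn le1r le_jrk.
rewrite Ekn_herm_coord; last by apply/andP; split; lia.
have -> : (k - (j + r - 1) - 1 = k - j - r)%N by lia.
have -> : (n - k + (j + r - 1) + 1 = n - k + j + r)%N by lia.
have {1 3}-> : n = (n - k + j + r + (k - j - r))%N by lia.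
rewrite herm_coord_closed -signr_odd.
by case: (odd _); rewrite ?mulr0 ?mul1r.
Qed.
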